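(* In the social learning model, assume there exist $c>0$, $k>0$ and $x_0>0$ such that $G_-(-x)=c\,x^{-k}$ and $G_+(x)=1-c\,x^{-k}$ for all $x>x_0$. Then there exists $X>0$ such that for all $x\ge X$, $$|x+D_-(x)|\le x\qquad\text{and}\qquad |{-x}+D_+(-x)|\le x.$$ Equivalently, for every $t$, if $|\ell_t|\ge X$ and the action $a_t$ disagrees with the sign of $\ell_t$ (i.e., $a_t\ne a_{t-1}$, where $\ell_t$ has the sign of $a_{t-1}$), then $|\ell_{t+1}|\le|\ell_t|$.
   Context: Social learning model. A state $\theta\in\{-1,+1\}$ is drawn with $\mathbb{P}(\theta=+1)=\mathbb{P}(\theta=-1)=1/2$. Agents $t=1,2,\dots$ receive private signals $s_t\in\mathbb{R}$ that are i.i.d. conditionally on $\theta$, with CDF $F_+$ if $\theta=+1$ and $F_-$ if $\theta=-1$; $F_+$ and $F_-$ are mutually absolutely continuous. Let $L_t=\log\frac{\mathbb{P}(\theta=+1\mid s_t)}{\mathbb{P}(\theta=-1\mid s_t)}$ be the private log-likelihood ratio, and let $G_+$, $G_-$ denote the CDFs of $L_t$ conditional on $\theta=+1$, $\theta=-1$ respectively. Signals are assumed unbounded: for every $M\in\mathbb{R}$, $\mathbb{P}(L_t>M)>0$ and $\mathbb{P}(L_t<-M)>0$. Agent $t$ observes $a_1,\dots,a_{t-1}$ and her own signal and chooses $a_t\in\{-1,+1\}$ (utility $1$ if $a_t=\theta$, else $0$). The public belief is $\mu_t=\mathbb{P}(\theta=+1\mid a_1,\dots,a_{t-1})$ and $\ell_t=\log\frac{\mu_t}{1-\mu_t}$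 (so $\ell_1=0$). In equilibrium $a_t=+1$ iff $\ell_t+L_t>0$, and otherwise $a_t=-1$. Consequently $\ell_{t+1}=\ell_t+D_+(\ell_t)$ if $a_t=+1$ and $\ell_{t+1}=\ell_t+D_-(\ell_t)$ if $a_t=-1$, where $D_+(x)=\log\frac{1-G_+(-x)}{1-G_-(-x)}$ and $D_-(x)=\log\frac{G_+(-x)}{G_-(-x)}$. We write $\mathbb{P}_+(\cdot)=\mathbb{P}(\cdot\mid\theta=+1)$ and $\mathbb{E}_+$ for the corresponding expectation. *)

From Stdlib Require Import Reals Lra.
Open Scope R_scope.

Definition is_CDF (G : R -> R) : Prop :=
  (forall x y, x <= y -> G x <= G y) /\
  (forall x eps, 0 < eps -> exists d, 0 < d /\
      forall y, x <= y < x + d -> Rabs (G y - G x) < eps) /\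
  (forall eps, 0 < eps -> exists M, forall x, x <= M -> Rabs (G x) < eps) /\
  (forall eps, 0 < eps -> exists M, forall x, M <= x -> Rabs (G x - 1) < eps).

(* (Gp, Gm) are the conditional CDFs (given theta = +1 / theta = -1) of the
   private log-likelihood ratio L = log dF_+/dF_-(s) with uniform prior.
   This is characterized by: both are CDFs and the law of L under theta=+1
   has density e^y with respect to its law under theta=-1, i.e. for every
   interval (a,b],  P_+(a<L<=b) = int_(a,b] e^y dP_-(y), which (for all
   intervals) is equivalent to the two-sided bounds below. *)
Definition LLR_CDFs (Gp Gm : R -> R) : Prop :=
  is_CDF Gp /\ is_CDF Gm /\
  (forall a b, a < b ->
     exp a * (Gm b - Gm a) <= Gp b - Gp a /\
     Gp b - Gp a <= exp b * (Gm b - Gm a)).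

(* Unbounded signals: P(L > M) > 0 and P(L < -M) > 0 for every M,
   where P = (P_+ + P_-)/2 is the unconditional law. *)
Definition unbounded_signals (Gp Gm : R -> R) : Prop :=
  forall M : R,
    0 < (1 - Gp M) + (1 - Gm M) /\
    exists y, y < - M /\ 0 < Gp y + Gm y.

Definition D_plus (Gp Gm : R -> R) (x : R) : R :=
  ln ((1 - Gp (- x)) / (1 - Gm (- x))).
Definition D_minus (Gp Gm : R -> R) (x : R) : R :=
  ln (Gp (- x) / Gm (- x)).

(* The likelihood-ratio identity dP_+ = e^y dP_- on (-oo, b] gives
   G_+(b) <= e^b G_-(b), and on [a, +oo) gives 1 - G_+(a) >= e^a (1 - G_-(a));
   these bound D_-(x) above by -x and D_+(-x) below by x.  For the other bounds
   apply the identity on the window (-3x/2, -x] (resp. (x, 3x/2]): with power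
   tails the window carries the fixed fraction 1 - (3/2)^(-k) of the tail mass,
   and the factor e^(-3x/2) (1 - (3/2)^(-k)) dominates e^(-2x) once x is
   large. *)
From Stdlib Require Import Reals Lra.
Open Scope R_scope.

Lemma ln_between a b r : exp a <= r <= exp b -> a <= ln r <= b.
Proof.
  intros [Har Hrb].
  assert (Hr : 0 < r) by (pose proof (exp_pos a); lra).
  split; apply Rnot_lt_le; intro Hlt.
  - apply exp_increasing in Hlt. rewrite exp_ln in Hlt by exact Hr. lra.
  - apply exp_increasing in Hlt. rewrite exp_ln in Hlt by exact Hr. lra.
Qed.

Lemma exp_le_mul_exp_shift d t s : 0 < d -> - ln d <= s -> exp t <= d * exp (t + s).
Proof.
  intros Hd Hs.
  replace (d * exp (t + s)) with (exp t * exp (ln d + s))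
    by (rewrite !exp_plus, exp_ln by exact Hd; ring).
  pose proof (exp_ineq1_le (ln d + s)). pose proof (exp_pos t).
  nra.
Qed.

Lemma Rpower_opp_bounds a k : 1 < a -> 0 < k -> 0 < Rpower a (- k) < 1.
Proof.
  intros Ha Hk. split; [apply exp_pos|].
  rewrite <- (Rpower_O a) by lra. apply Rpower_lt; lra.
Qed.

Lemma power_tail_scale c k a x :
  0 < a -> 0 < x -> c * Rpower (a * x) (- k) = Rpower a (- k) * (c * Rpower x (- k)).
Proof. intros Ha Hx. rewrite <- Rpower_mult_distr by assumption. ring. Qed.

Section CDF.

Variable G : R -> R.
Hypothesis HG : is_CDF G.

Lemma is_CDF_ge0 a : 0 <= G a.
Proof.
  destruct HG as [Hmono [_ [Hlim0 _]]].
  apply Rnot_lt_le; intro Hneg.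
  destruct (Hlim0 (- G a)) as [M HM]; [lra|].
  specialize (HM (Rmin M a) (Rmin_l M a)). apply Rabs_def2 in HM.
  specialize (Hmono (Rmin M a) a (Rmin_r M a)).
  lra.
Qed.

Lemma is_CDF_le1 a : G a <= 1.
Proof.
  destruct HG as [Hmono [_ [_ Hlim1]]].
  apply Rnot_lt_le; intro Hgt.
  destruct (Hlim1 (G a - 1)) as [M HM]; [lra|].
  specialize (HM (Rmax M a) (Rmax_l M a)). apply Rabs_def2 in HM.
  specialize (Hmono a (Rmax M a) (Rmax_r M a)).
  lra.
Qed.

End CDF.

Section LikelihoodRatio.

Variables Gp Gm : R -> R.
Hypothesis HL : LLR_CDFs Gp Gm.

Lemma LLR_lower_tail b : Gp b <= exp b * Gm b.
Proof.
  destruct HL as [[_ [_ [Hlim0 _]]] [HGm Hinc]].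
  apply Rnot_lt_le; intro Hgt.
  destruct (Hlim0 (Gp b - exp b * Gm b)) as [M HM]; [lra|].
  set (y := Rmin M (b - 1)).
  specialize (HM y (Rmin_l _ _)). apply Rabs_def2 in HM.
  destruct (Hinc y b) as [_ Hup]; [pose proof (Rmin_r M (b - 1)); unfold y; lra|].
  pose proof (is_CDF_ge0 Gm HGm y). pose proof (exp_pos b).
  nra.
Qed.

Lemma LLR_upper_tail a : exp a * (1 - Gm a) <= 1 - Gp a.
Proof.
  destruct HL as [HGp [[_ [_ [_ Hlim1]]] Hinc]].
  apply Rnot_lt_le; intro Hgt.
  set (eps := exp a * (1 - Gm a) - (1 - Gp a)).
  pose proof (exp_pos a) as Hea.
  destruct (Hlim1 (eps / (2 * exp a))) as [M HM].
  { apply Rdiv_lt_0_compat; unfold eps; lra. }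
  set (y := Rmax M (a + 1)).
  specialize (HM y (Rmax_l _ _)). apply Rabs_def2 in HM.
  destruct (Hinc a y) as [Hlow _]; [pose proof (Rmax_r M (a + 1)); unfold y; lra|].
  pose proof (is_CDF_le1 Gp HGp y).
  assert (exp a * (1 - Gm y) < eps / 2).
  { replace (eps / 2) with (exp a * (eps / (2 * exp a))) by (field; lra).
    apply Rmult_lt_compat_l; lra. }
  unfold eps in *. lra.
Qed.

Lemma LLR_lower_window y b : y < b -> exp y * (Gm b - Gm y) <= Gp b.
Proof.
  intro Hyb. destruct HL as [HGp [_ Hinc]].
  pose proof (is_CDF_ge0 Gp HGp y). pose proof (proj1 (Hinc y b Hyb)).
  lra.
Qed.

Lemma LLR_upper_window a y : a < y -> (1 - Gp a) - (1 - Gp y) <= exp y * (1 - Gm a).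
Proof.
  intro Hay. destruct HL as [_ [HGm Hinc]].
  pose proof (is_CDF_le1 Gm HGm y). pose proof (proj2 (Hinc a y Hay)).
  pose proof (exp_pos y).
  nra.
Qed.

Lemma D_minus_bounds x s :
  0 < Gm (- x) -> exp (- s) * Gm (- x) <= Gp (- x) ->
  - s <= D_minus Gp Gm x <= - x.
Proof.
  intros Hm Hlow. unfold D_minus.
  apply ln_between. split.
  - apply Rmult_le_reg_r with (Gm (- x)); [exact Hm|].
    unfold Rdiv. rewrite Rmult_assoc, Rinv_l by lra. lra.
  - apply Rmult_le_reg_r with (Gm (- x)); [exact Hm|].
    unfold Rdiv. rewrite Rmult_assoc, Rinv_l by lra.
    rewrite Rmult_1_r. apply LLR_lower_tail.
Qed.

Lemma D_plus_bounds x s :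
  0 < 1 - Gp x -> 1 - Gp x <= exp s * (1 - Gm x) ->
  x <= D_plus Gp Gm (- x) <= s.
Proof.
  intros Hp Hup. unfold D_plus. rewrite Ropp_involutive.
  pose proof (LLR_upper_tail x) as Htail.
  assert (Hm : 0 < 1 - Gm x) by (pose proof (exp_pos s); nra).
  apply ln_between. split.
  - apply Rmult_le_reg_r with (1 - Gm x); [exact Hm|].
    unfold Rdiv. rewrite Rmult_assoc, Rinv_l by lra. lra.
  - apply Rmult_le_reg_r with (1 - Gm x); [exact Hm|].
    unfold Rdiv. rewrite Rmult_assoc, Rinv_l by lra. lra.
Qed.

End LikelihoodRatio.

Theorem lemma10 (Gp Gm : R -> R) (c k x0 : R) :
  LLR_CDFs Gp Gm ->
  unbounded_signals Gp Gm ->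
  0 < c -> 0 < k -> 0 < x0 ->
  (forall x, x0 < x -> Gm (- x) = c * Rpower x (- k)) ->
  (forall x, x0 < x -> Gp x = 1 - c * Rpower x (- k)) ->
  exists X, 0 < X /\
    forall x, X <= x ->
      Rabs (x + D_minus Gp Gm x) <= x /\
      Rabs (- x + D_plus Gp Gm (- x)) <= x.
Proof.
  intros HL _ Hc Hk Hx0 HGm HGp.
  set (q := Rpower (3/2) (- k)).
  assert (Hq : 0 < q < 1) by (apply Rpower_opp_bounds; lra).
  exists (Rmax (x0 + 1) (- 2 * ln (1 - q))).
  pose proof (Rmax_l (x0 + 1) (- 2 * ln (1 - q))).
  pose proof (Rmax_r (x0 + 1) (- 2 * ln (1 - q))).
  split; [lra|]. intros x Hx.
  set (m := c * Rpower x (- k)).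
  assert (Hm : 0 < m) by (apply Rmult_lt_0_compat; [lra | apply exp_pos]).
  assert (Hscale : c * Rpower (3/2 * x) (- k) = q * m) by (apply power_tail_scale; lra).
  assert (Hgap : forall t, exp t <= (1 - q) * exp (t + x / 2)).
  { intro t. apply exp_le_mul_exp_shift; lra. }
  split; apply Rabs_le.
  - assert (Hm1 : Gm (- x) = m) by (apply HGm; lra).
    assert (Hm2 : Gm (- (3/2 * x)) = q * m) by (rewrite HGm by lra; exact Hscale).
    pose proof (LLR_lower_window Gp Gm HL (- (3/2 * x)) (- x)) as Hwin.
    pose proof (Hgap (- (2 * x))) as Hg.
    replace (- (2 * x) + x / 2) with (- (3/2 * x)) in Hg by field.
    assert (Hlow : exp (- (2 * x)) * Gm (- x) <= Gp (- x)).
    { rewrite Hm1, Hm2 in Hwin; rewrite Hm1. pose proof (exp_pos (- (3/2 * x))). nra. }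
    pose proof (D_minus_bounds Gp Gm HL x (2 * x)). lra.
  - assert (Hp1 : Gp x = 1 - m) by (apply HGp; lra).
    assert (Hp2 : Gp (3/2 * x) = 1 - q * m) by (rewrite HGp, Hscale by lra; ring).
    pose proof (LLR_upper_window Gp Gm HL x (3/2 * x)) as Hwin.
    pose proof (Hgap (3/2 * x)) as Hg.
    replace (3/2 * x + x / 2) with (2 * x) in Hg by field.
    pose proof (is_CDF_le1 Gm (proj1 (proj2 HL)) x).
    assert (Hup : 1 - Gp x <= exp (2 * x) * (1 - Gm x)).
    { rewrite Hp1, Hp2 in Hwin; rewrite Hp1. nra. }
    pose proof (D_plus_bounds Gp Gm HL x (2 * x)). lra.
Qed.
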